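(* Let $\mathfrak{A}_q$ be a quantum cluster algebra with quantum seed $(\mathbf{x},B,\Lambda)$, $\mathbf{x}=(x_1,\ldots,x_n)$, assume that all prime ideals of $\mathfrak{A}_q$ are completely prime, and assume that the cluster $\mathbf{x}$ is super-toric. Let $\mathcal{I}$ be a torus invariant non-zero proper prime ideal of $\mathfrak{A}_q$ such that $\mathcal{I}\cap\mathbf{x}=\{x_{k+1},\ldots,x_n\}$. Then $\mathcal{I}\cap\mathbb{C}_\Lambda[x_1,\ldots,x_n]$ is generated by $\{x_{k+1},\ldots,x_n\}$.
   Context: A compatible pair $(B,\Lambda)$ consists of an $m\times n$ integer matrix $B$ ($m\le n$) with skew-symmetrizable principal $m\times m$ part and a skew-symmetric $n\times n$ integer matrix $\Lambda=(\lambda_{ij})$ such that $B\Lambda$ has entries $d_i\delta_{ij}$ with $d_i$ positive integers. In the quantum cluster algebra, the seed variables generate the quantum affine space $\mathbb{C}_\Lambda[x_1,\ldots,x_n]$ with relations $x_ix_j=q^{\lambda_{ij}}x_jx_i$, and $\mathfrak{A}_q\subset\mathbb{C}_\Lambda[x_1^{\pm1},\ldots,x_n^{\pm1}]$. Torus action: with $T=\ker(B)\subset\mathbb{Z}^n$, each $\mathbf{b}\in T$ and $\alpha\in\mathbb{C}^*$ give the global toric action $x_i\mapsto\alpha^{b_i}x_i$, acting on $\mathfrak{A}_q$ by automorphisms; torus invariant means stable under all of these. Super-toric: for $1\le k\le n$ let $T_{[1,k]}\subset\mathbb{Z}^k$ be the projection of $T$ onto the first $k$ coordinates and $\Lambda_{[1,k]}$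 the principal $k\times k$ submatrix of $\Lambda$; the cluster is super-toric if $\mathrm{rk}(T_{[1,k]}+\mathrm{Im}(\Lambda_{[1,k]}))=k$ for all $k=1,\ldots,n$. Completely prime: $ab\in\mathcal{I}\Rightarrow a\in\mathcal{I}$ or $b\in\mathcal{I}$. *)

From HB Require Import structures.
From mathcomp Require Import all_boot all_order all_algebra.
From mathcomp Require Import Rstruct complex.
From mathcomp Require Import boolp classical_sets cardinality fsbigop.
From Stdlib Require Reals.

Set Implicit Arguments.
Unset Strict Implicit.
Unset Printing Implicit Defensive.
Import Order.TTheory GRing.Theory Num.Theory.
Local Open Scope classical_set_scope.
Local Open Scope ring_scope.

Definition CC : numClosedFieldType := (Rdefinitions.R)[i].

(** Exponent vectors in Z^N and (possibly infinite) coefficient functions.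
    An element of the quantum torus is a finitely supported function
    Z^N -> C, c |-> coefficient of X^c. *)
Definition expo (N : nat) := 'rV[int]_N.
Definition qfun (N : nat) := expo N -> CC.

Definition fin_supp N (f : qfun N) : Prop := finite_set [set c | f c != 0].

Definition lam N (L : 'M[int]_N) (a b : expo N) : int := (a *m L *m b^T) 0 0.

Definition qadd N (f g : qfun N) : qfun N := fun c => f c + g c.
Definition qscale N (z : CC) (f : qfun N) : qfun N := fun c => z * f c.
Definition qzero N : qfun N := fun _ => 0.
Arguments qzero : clear implicits.
Definition qmono N (a : expo N) : qfun N := fun c => if c == a then 1 else 0.
Definition qone N : qfun N := qmono 0.
Arguments qone : clear implicits.
Definition qconst N (z : CC) : qfun N := qscale z (qone N).
Arguments qconst : clear implicits.

(** Multiplication of the based quantum torus C_Lambda[X^{+-1}]: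
    X^a X^b = (q^{1/2})^{Lambda(a,b)} X^{a+b}, where qh = q^{1/2}.
    In particular x_i x_j = q^{lambda_ij} x_j x_i for x_i = X^{e_i}. *)
Definition qmul N (qh : CC) (L : 'M[int]_N) (f g : qfun N) : qfun N :=
  fun c => \sum_(a \in [set: expo N]) (f a * g (c - a) * qh ^ (lam L a (c - a))).

Definition qpow N qh (L : 'M[int]_N) (f : qfun N) (k : nat) : qfun N :=
  iter k (qmul qh L f) (qone N).

Definition evec N (i : 'I_N) : expo N := \row_j (i == j)%:Z.

Definition is_subalg N qh (L0 : 'M[int]_N) (S : set (qfun N)) : Prop :=
  (forall z, S (qconst N z)) /\
  (forall f g, S f -> S g -> S (qadd f g)) /\
  (forall f g, S f -> S g -> S (qmul qh L0 f g)).

Definition subalg_gen N qh (L0 : 'M[int]_N) (G : set (qfun N)) : set (qfun N) :=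
  [set f | forall S, is_subalg qh L0 S -> G `<=` S -> S f].

Definition is_ideal N qh (L0 : 'M[int]_N) (A I : set (qfun N)) : Prop :=
  I `<=` A /\ I (qzero N) /\
  (forall f g, I f -> I g -> I (qadd f g)) /\
  (forall a f, A a -> I f -> I (qmul qh L0 a f) /\ I (qmul qh L0 f a)).

Definition ideal_gen N qh (L0 : 'M[int]_N) (A G : set (qfun N)) : set (qfun N) :=
  [set f | forall J, is_ideal qh L0 A J -> G `<=` J -> J f].

Definition is_prime_ideal N qh (L0 : 'M[int]_N) (A I : set (qfun N)) : Prop :=
  is_ideal qh L0 A I /\ I <> A /\
  (forall J K, is_ideal qh L0 A J -> is_ideal qh L0 A K ->
     (forall a b, J a -> K b -> I (qmul qh L0 a b)) -> J `<=` I \/ K `<=` I).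

Definition is_completely_prime N qh (L0 : 'M[int]_N) (A I : set (qfun N)) : Prop :=
  is_ideal qh L0 A I /\ I <> A /\
  (forall a b, A a -> A b -> I (qmul qh L0 a b) -> I a \/ I b).

Definition skew_symmetric N (L : 'M[int]_N) : Prop := L^T = - L.

Definition principal_skew_symmetrizable m p (B : 'M[int]_(m, m + p)) : Prop :=
  exists D : 'I_m -> int, (forall i, 0 < D i) /\
    forall i j : 'I_m, D i * B i (lshift p j) = - (D j * B j (lshift p i)).

Definition compatible_pair m p (B : 'M[int]_(m, m + p)) (L : 'M[int]_(m + p)) : Prop :=
  principal_skew_symmetrizable B /\ skew_symmetric L /\
  exists d : 'I_m -> int, (forall i, 0 < d i) /\
    forall (i : 'I_m) (j : 'I_(m + p)),
      (B *m L) i j = if j == lshift p i then d i else 0.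

Record qseed (m p : nat) := QSeed {
  sX : 'I_(m + p) -> qfun (m + p);
  sB : 'M[int]_(m, m + p);
  sL : 'M[int]_(m + p) }.

Definition posp (z : int) : int := Num.max z 0.

(** E-matrix of Berenstein-Zelevinsky (transposed convention: our B is the
    transpose of their tilde-B). *)
Definition mutE m p (B : 'M[int]_(m, m + p)) (k : 'I_m) : 'M[int]_(m + p) :=
  \matrix_(i, j) if j == lshift p k then
                   (if i == lshift p k then -1 else posp (- B k i))
                 else (i == j)%:Z.

Definition mutL m p (B : 'M[int]_(m, m + p)) (L : 'M[int]_(m + p)) (k : 'I_m) :=
  (mutE B k)^T *m L *m mutE B k.

Definition mutB m p (B : 'M[int]_(m, m + p)) (k : 'I_m) : 'M[int]_(m, m + p) :=
  \matrix_(i, j) if (i == k) || (j == lshift p k) then - B i j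
                 else B i j + Num.sg (B k j) * posp (B i (lshift p k) * B k j).

(** toric-frame monomial M(v), v in N^N, of a seed with cluster X and
    matrix L:  M(v) = q^{-1/2 sum_{i<j} v_i v_j lambda_ij} X_1^{v_1}...X_N^{v_N}
    (ordered product), computed in the initial quantum torus (qh, L0). *)
Definition seed_mono N qh (L0 : 'M[int]_N) (X : 'I_N -> qfun N)
    (L : 'M[int]_N) (v : expo N) : qfun N :=
  qscale (qh ^ (- \sum_(i < N) \sum_(j < N | (i < j)%N) v 0 i * v 0 j * L i j))
    (foldr (fun i acc => qmul qh L0 (qpow qh L0 (X i) (absz (v 0 i))) acc)
           (qone N) (enum 'I_N)).

(** The new cluster
    variable X'_k is characterised (as an element of the initial quantum
    torus, which contains it by the quantum Laurent phenomenon; it is unique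
    since the torus is a domain) by the quantum exchange relation
      X'_k X_k = q^{Lambda(v+,e_k)/2} M(v+) + q^{Lambda(v-,e_k)/2} M(v-),
    which is equivalent to the BZ formula X'_k = M(-e_k+v+) + M(-e_k+v-). *)
Definition mutation m p (qh : CC) (L0 : 'M[int]_(m + p))
    (S : qseed m p) (k : 'I_m) (S' : qseed m p) : Prop :=
  let kk := lshift p k in
  let vp : expo (m + p) := \row_j posp (sB S k j) in
  let vm : expo (m + p) := \row_j posp (- sB S k j) in
  sB S' = mutB (sB S) k /\ sL S' = mutL (sB S) (sL S) k /\
  (forall i, i != kk -> sX S' i = sX S i) /\
  fin_supp (sX S' kk) /\
  qmul qh L0 (sX S' kk) (sX S kk) =
    qadd (qscale (qh ^ lam (sL S) vp (evec kk)) (seed_mono qh L0 (sX S) (sL S) vp))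
         (qscale (qh ^ lam (sL S) vm (evec kk)) (seed_mono qh L0 (sX S) (sL S) vm)).

Inductive reachable m p (qh : CC) (L0 : 'M[int]_(m + p)) (S0 : qseed m p) :
    qseed m p -> Prop :=
  | reach_refl : reachable qh L0 S0 S0
  | reach_step S k S' : reachable qh L0 S0 S -> mutation qh L0 S k S' ->
      reachable qh L0 S0 S'.

Definition init_seed m p (B : 'M[int]_(m, m + p)) (L : 'M[int]_(m + p)) : qseed m p :=
  QSeed (fun i => qmono (evec i)) B L.

Definition cluster_vars m p qh (B : 'M[int]_(m, m + p)) (L : 'M[int]_(m + p)) :
    set (qfun (m + p)) :=
  [set f | exists S, reachable qh L (init_seed B L) S /\ exists i, f = sX S i].

(** the quantum cluster algebra A_q (frozen variables not inverted) *)
Definition qcluster_alg m p qh (B : 'M[int]_(m, m + p)) (L : 'M[int]_(m + p)) :=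
  subalg_gen qh L (cluster_vars qh B L).

Definition qaffine N qh (L : 'M[int]_N) :=
  subalg_gen qh L [set f | exists i, f = qmono (evec i)].

Definition toric_act N (b : expo N) (al : CC) (f : qfun N) : qfun N :=
  fun c => al ^ ((c *m b^T) 0 0) * f c.

Definition torus_invariant m p (B : 'M[int]_(m, m + p)) (I : set (qfun (m + p))) :=
  forall (b : expo (m + p)) (al : CC), B *m b^T = 0 -> al != 0 ->
    forall f, I f -> I (toric_act b al f).

Definition ncoord N (b : expo N) (i : nat) : int :=
  if insub i is Some j then b 0 j else 0.
Definition nentry N (L : 'M[int]_N) (i j : nat) : int :=
  if insub i is Some i' then (if insub j is Some j' then L i' j' else 0) else 0.

Definition TplusIm m p (B : 'M[int]_(m, m + p)) (L : 'M[int]_(m + p)) (k : nat)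
    (w : 'rV[int]_k) : Prop :=
  exists (b : expo (m + p)) (c : 'rV[int]_k), B *m b^T = 0 /\
    forall i : 'I_k, w 0 i = ncoord b i + \sum_(j < k) nentry L i j * c 0 j.

(** rk(T_[1,k] + Im Lambda_[1,k]) = k for all k = 1..n: the subgroup contains
    k Z-linearly independent vectors (rows of a nonsingular matrix). *)
Definition super_toric m p (B : 'M[int]_(m, m + p)) (L : 'M[int]_(m + p)) : Prop :=
  forall k : nat, (1 <= k <= m + p)%N ->
    exists M : 'M[int]_k, \det M != 0 /\ forall r : 'I_k, TplusIm B L (row r M).

From HB Require Import structures.
From mathcomp Require Import all_boot all_order all_algebra.
From mathcomp Require Import Rstruct complex.
From mathcomp Require Import boolp classical_sets cardinality fsbigop.
From mathcomp Require Import ring zify.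
Import Order.TTheory GRing.Theory Num.Theory.
Local Open Scope classical_set_scope.
Local Open Scope ring_scope.
Set Implicit Arguments.
Unset Strict Implicit.
Unset Printing Implicit Defensive.

(* The monomials in x_1, ..., x_k avoid the completely prime ideal I, because no
   x_i with i <= k lies in I.  Modulo the ideal generated by x_{k+1}, ..., x_n, an
   element of I inside C_Lambda[x_1, ..., x_n] is a combination g of such monomials,
   and it suffices to show g = 0.  If g had two distinct monomials X^a0 and X^a1,
   super-toricity would give a toric weight b and a vector c supported in [1, k] such
   that a |-> a.b + Lambda(a, c) separates a0 from a1; with v - u = c, a suitable
   combination of the torus twist of X^u g X^v and of X^v g X^u is an element of I
   of the same kind with one monomial fewer but a nonzero X^a1-coefficient,
   contradicting induction on the size of the support.  A single monomial cannot
   lie in I either. *)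

Section Pairing.
Variables (N : nat) (L : 'M[int]_N).

Lemma lam0l x : lam L 0 x = 0.
Proof. by rewrite /lam !mul0mx mxE. Qed.

Lemma lam0r x : lam L x 0 = 0.
Proof. by rewrite /lam trmx0 mulmx0 mxE. Qed.

Lemma lamDl x y z : lam L (x + y) z = lam L x z + lam L y z.
Proof. by rewrite /lam !mulmxDl mxE. Qed.

Lemma lamDr x y z : lam L z (x + y) = lam L z x + lam L z y.
Proof. by rewrite /lam linearD /= mulmxDr mxE. Qed.

Lemma lamNr x z : lam L z (- x) = - lam L z x.
Proof. by rewrite /lam linearN /= mulmxN mxE. Qed.

Lemma lam_skew x y : skew_symmetric L -> lam L y x = - lam L x y.
Proof.
move=> skL; have trE (M : 'M[int]_1) : M 0 0 = M^T 0 0 by rewrite mxE.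
by rewrite /lam trE !trmx_mul trmxK skL mulNmx mulmxN mxE mulmxA.
Qed.

End Pairing.

Lemma expfz_inj (F : fieldType) (x : F) :
  x != 0 -> (forall n, (0 < n)%N -> x ^+ n != 1) -> injective (fun z : int => x ^ z).
Proof.
move=> x0 x_nroot y z /= exy; apply/eqP; rewrite -subr_eq0; apply/eqP.
have : x ^ (y - z) = 1 by rewrite expfzDr // exy -expfzDr // subrr.
case: (y - z) => [[|n]|n] //= /eqP; first by rewrite (negbTE (x_nroot n.+1 isT)).
by rewrite invr_eq1 (negbTE (x_nroot n.+1 isT)).
Qed.

Section QuantumTorus.
Variables (N : nat) (qh : CC) (L : 'M[int]_N).

Lemma fsbigT_single (F : expo N -> CC) x :
  (forall y, y != x -> F y = 0) -> \sum_(a \in [set: expo N]) F a = F x.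
Proof.
move=> F0; rewrite -(fsbig_widen [set x] setT F) //; first by rewrite fsbig_set1.
by move=> y [_ /= /eqP]; apply: F0.
Qed.

Lemma qmul_monoL u g c : qmul qh L (qmono u) g c = g (c - u) * qh ^ lam L u (c - u).
Proof.
rewrite /qmul (@fsbigT_single _ u) /qmono ?eqxx ?mul1r //.
by move=> y /negbTE ->; rewrite !mul0r.
Qed.

Lemma qmul_monoR v g c : qmul qh L g (qmono v) c = g (c - v) * qh ^ lam L (c - v) v.
Proof.
rewrite /qmul (@fsbigT_single _ (c - v)) /qmono; first by rewrite subKr eqxx mulr1.
move=> y yv; case: eqP => [e|]; last by rewrite mulr0 mul0r.
by case/eqP: yv; rewrite -e subKr.
Qed.

Lemma qmul_mono a b :
  qmul qh L (qmono a) (qmono b) = qscale (qh ^ lam L a b) (qmono (a + b)).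
Proof.
apply/funext => c; rewrite qmul_monoL /qscale /qmono.
have -> : (c - a == b) = (c == a + b) by rewrite subr_eq addrC.
by case: eqP => [->|]; rewrite ?mul1r ?mulr1 ?mul0r ?mulr0 // [a + b]addrC addrK.
Qed.

Lemma qmul_constl z g : qmul qh L (qconst N z) g = qscale z g.
Proof.
apply/funext => c; rewrite /qmul (@fsbigT_single _ 0) /qconst /qscale /qone /qmono.
  by rewrite eqxx subr0 lam0l expr0z !mulr1.
by move=> y /negbTE ->; rewrite mulr0 !mul0r.
Qed.

Lemma qmul_oner f : qmul qh L f (qone N) = f.
Proof. by apply/funext => c; rewrite qmul_monoR subr0 lam0r expr0z mulr1. Qed.

Lemma qscaleA z z' (f : qfun N) : qscale z (qscale z' f) = qscale (z * z') f.
Proof. by apply/funext => c; rewrite /qscale mulrA. Qed.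

Lemma qscale1 (f : qfun N) : qscale 1 f = f.
Proof. by apply/funext => c; rewrite /qscale mul1r. Qed.

Lemma qmono_addE a b : qh != 0 ->
  qmono (a + b) = qscale (qh ^ (- lam L a b)) (qmul qh L (qmono a) (qmono b)).
Proof. by move=> qh0; rewrite qmul_mono qscaleA -expfzDr // addNr expr0z qscale1. Qed.

Lemma qmul_neq0_supp f g c :
  qmul qh L f g c != 0 -> exists a, f a != 0 /\ g (c - a) != 0.
Proof.
move=> fgc; have [a _] := @fsbigN1 _ _ _ unit _ _
  (fun _ a => f a * g (c - a) * qh ^ lam L a (c - a)) tt fgc.
by rewrite !mulf_eq0 !negb_or => /andP[/andP[fa ga] _]; exists a.
Qed.

Lemma qmul_conj_monoE u v g a : qh != 0 ->
  qmul qh L (qmul qh L (qmono u) g) (qmono v) (a + (u + v)) =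
  g a * qh ^ (lam L u a + lam L (a + u) v).
Proof.
move=> qh0; have e : a + (u + v) - v = a + u by rewrite addrA addrK.
by rewrite qmul_monoR e qmul_monoL addrK expfzDr // mulrA.
Qed.

End QuantumTorus.

Section Exponents.
Variable N : nat.

Definition nonneg (a : expo N) := forall i, 0 <= a 0 i.

Definition low_expo k (a : expo N) := nonneg a /\ forall i : 'I_N, (k <= i)%N -> a 0 i = 0.

Lemma nonneg_evec j : nonneg (evec j).
Proof. by move=> i; rewrite mxE. Qed.

Lemma nonnegD a b : nonneg a -> nonneg b -> nonneg (a + b).
Proof. by move=> a_ge0 b_ge0 i; rewrite mxE addr_ge0. Qed.

Lemma nonneg_subr_evec a j : nonneg a -> 0 < a 0 j -> nonneg (a - evec j).
Proof.
move=> a_ge0 aj i; rewrite !mxE; case: eqP => [<-|_]; last by rewrite subr0.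
by rewrite subr_ge0.
Qed.

Lemma low_expoD k a b : low_expo k a -> low_expo k b -> low_expo k (a + b).
Proof.
move=> [a_ge0 a_low] [b_ge0 b_low]; split; first exact: nonnegD.
by move=> i ki; rewrite mxE a_low // b_low // addr0.
Qed.

Lemma low_expoD_evec k a j : nonneg a -> low_expo k (a + evec j) ->
  low_expo k a /\ (j < k)%N.
Proof.
move=> a_ge0 [_ aj_low]; have aj_ge0 := a_ge0 j.
have low_i (i : 'I_N) : (k <= i)%N -> a 0 i + (j == i)%:Z = 0 by move/aj_low; rewrite !mxE.
split; first by split=> // i /low_i; have := a_ge0 i; case: (j == i); lia.
by rewrite ltnNge; apply/negP => /low_i; rewrite eqxx; lia.
Qed.

Lemma nonneg_expo_ind (P : expo N -> Prop) :
  P 0 -> (forall a j, nonneg a -> P a -> P (a + evec j)) ->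
  forall a, nonneg a -> P a.
Proof.
move=> P0 PS a a_ge0.
have [n] : exists n, \sum_i a 0 i = n%:Z.
  by exists (absz (\sum_i a 0 i)); rewrite gez0_abs // sumr_ge0.
elim: n a a_ge0 => [|n IHn] a a_ge0 sa.
  suff -> : a = 0 by [].
  by apply/matrixP => i j; rewrite ord1 mxE; move/psumr_eq0P: sa => ->.
have [j aj] : exists j, 0 < a 0 j.
  apply/not_existsP => a_le0; suff : \sum_i a 0 i = 0 by rewrite sa.
  by apply: big1 => i _; apply/eqP; rewrite eq_le a_ge0 andbT leNgt; apply/negP.
rewrite -[a](subrK (evec j)); apply: PS; first exact: nonneg_subr_evec.
apply: IHn; first exact: nonneg_subr_evec.
rewrite (eq_bigr (fun i => a 0 i - (j == i)%:Z)) => [|i _]; last by rewrite !mxE.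
rewrite sumrB sa (bigD1 j) //= eqxx big1 => [|i /negbTE]; last by rewrite eq_sym => ->.
lia.
Qed.

End Exponents.

Section SubalgebrasIdeals.
Variables (N : nat) (qh : CC) (L : 'M[int]_N).

Lemma is_subalg_gen G : is_subalg qh L (subalg_gen qh L G).
Proof.
split; [|split].
- by move=> z S [S1 _] _.
- by move=> f g Sf Sg S HS GS; apply: HS.2.1; [apply: Sf | apply: Sg].
- by move=> f g Sf Sg S HS GS; apply: HS.2.2; [apply: Sf | apply: Sg].
Qed.

Lemma subalg_gen_sub G : G `<=` subalg_gen qh L G.
Proof. by move=> f Gf S _; apply. Qed.

Lemma subalg_qscale S z f : is_subalg qh L S -> S f -> S (qscale z f).
Proof. by move=> [S1 [_ SM]] Sf; rewrite -(qmul_constl qh L); apply: SM. Qed.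

Lemma ideal_qscale A I z f : is_subalg qh L A -> is_ideal qh L A I -> I f -> I (qscale z f).
Proof.
by move=> [A1 _] HI If; rewrite -(qmul_constl qh L); exact: (HI.2.2.2 _ _ (A1 z) If).1.
Qed.

Lemma ideal_setI_subalg A S I : S `<=` A -> is_subalg qh L S -> is_ideal qh L A I ->
  is_ideal qh L S (I `&` S).
Proof.
move=> SA [S1 [SD SM]] [IA [I0 [ID IM]]]; split; first by move=> f [].
split.
  split=> //; suff -> : qzero N = qconst N 0 by [].
  by apply/funext => c; rewrite /qconst /qscale mul0r.
split; first by move=> f g [If Sf] [Ig Sg]; split; [apply: ID | apply: SD].
move=> a f Sa [If Sf]; have [Iaf Ifa] := IM _ _ (SA _ Sa) If.
by split; split=> //; apply: SM.
Qed.

Lemma subalg_mono S : qh != 0 -> is_subalg qh L S -> (forall i, S (qmono (evec i))) ->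
  forall a, nonneg a -> S (qmono a).
Proof.
move=> qh0 HS Se; apply: nonneg_expo_ind.
  by have := HS.1 1; rewrite /qconst /qone qscale1.
move=> a j _ Sa; rewrite (@qmono_addE _ qh L) //.
by apply: subalg_qscale => //; apply: HS.2.2.
Qed.

Lemma qaffine_mono : qh != 0 -> forall a, nonneg a -> qaffine qh L (qmono a).
Proof.
move=> qh0; apply: subalg_mono qh0 (is_subalg_gen _) _ => i.
by apply: subalg_gen_sub; exists i.
Qed.

Lemma low_mono_notin A I k : qh != 0 -> is_subalg qh L A ->
  (forall a, nonneg a -> A (qmono a)) -> is_completely_prime qh L A I ->
  (forall i : 'I_N, (i < k)%N -> ~ I (qmono (evec i))) ->
  forall a, low_expo k a -> ~ I (qmono a).
Proof.
move=> qh0 HA Amono [HI [IA Icp]] Ie a [a_ge0 a_low].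
move: a_low; apply: (@nonneg_expo_ind _ (fun a => _ -> ~ I (qmono a))) a a_ge0.
  move=> _ I1; apply: IA; apply/seteqP; split=> [|f Af]; first exact: HI.1.
  by rewrite -(qmul_oner qh L f); exact: (HI.2.2.2 _ _ Af I1).1.
move=> a j a_ge0 IHa aj_low Iaj.
have [[_ a_low] jk] := low_expoD_evec a_ge0 (conj (nonnegD a_ge0 (nonneg_evec j)) aj_low).
have : I (qmul qh L (qmono a) (qmono (evec j))).
  by rewrite qmul_mono; exact: ideal_qscale HA HI Iaj.
case/Icp; [exact: Amono | exact/Amono/nonneg_evec | exact: IHa | exact: Ie].
Qed.

End SubalgebrasIdeals.

Section FiniteSupport.
Variables (N : nat) (qh : CC) (L : 'M[int]_N).

Definition fsupp_in (P : expo N -> Prop) (f : qfun N) :=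
  exists s : seq (expo N), forall c, f c != 0 -> c \in s /\ P c.

Lemma is_subalg_fsupp_nonneg : is_subalg qh L (fsupp_in (@nonneg N)).
Proof.
split; [|split].
- move=> z; exists [:: 0] => c; rewrite /qconst /qscale /qone /qmono.
  by case: (c =P 0) => [-> _|_]; [split=> [|i]; rewrite ?inE ?mxE | rewrite mulr0 eqxx].
- move=> f g [s Hs] [t Ht]; exists (s ++ t) => c; rewrite /qadd mem_cat.
  have [fc|/Hs[-> c_ge0] _ //] := eqVneq (f c) 0.
  by rewrite fc add0r => /Ht[-> c_ge0]; rewrite orbT.
- move=> f g [s Hs] [t Ht]; exists [seq x + y | x <- s, y <- t] => c.
  case/qmul_neq0_supp => a [/Hs[sa a_ge0] /Ht[tca ca_ge0]].
  by rewrite -(subrKC a c); split; [exact: allpairs_f | exact: nonnegD].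
Qed.

Lemma qaffine_fsupp : qaffine qh L `<=` fsupp_in (@nonneg N).
Proof.
move=> f; apply; first exact: is_subalg_fsupp_nonneg.
move=> _ [i ->]; exists [:: evec i] => c; rewrite /qmono.
case: (c =P evec i) => [-> _|_]; last by rewrite eqxx.
by split; [rewrite inE | exact: nonneg_evec].
Qed.

Lemma fsupp_in_sub (J : set (qfun N)) (P : expo N -> Prop) :
  J (qzero N) -> (forall f g, J f -> J g -> J (qadd f g)) ->
  (forall z f, J f -> J (qscale z f)) -> (forall a, P a -> J (qmono a)) ->
  fsupp_in P `<=` J.
Proof.
move=> J0 JD JZ JP f [s]; elim: s f => [|a s IHs] f f_supp.
  suff -> : f = qzero N by [].
  by apply/funext => c; apply/eqP/negPn/negP => /f_supp[].
pose f' c := if c == a then 0 else f c.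
have -> : f = qadd (qscale (f a) (qmono a)) f'.
  apply/funext => c; rewrite /qadd /qscale /qmono /f'.
  by case: eqP => [->|]; rewrite ?mulr1 ?addr0 ?mulr0 ?add0r.
apply: JD; last apply: IHs.
  have [fa|/f_supp[_ /JP]] := eqVneq (f a) 0; last exact: JZ.
  suff -> : qscale (f a) (qmono a) = qzero N by [].
  by apply/funext => c; rewrite /qscale fa mul0r.
move=> c; rewrite /f'; case: (c =P a) => [_|/eqP ca]; first by rewrite eqxx.
by case/f_supp; rewrite inE (negbTE ca).
Qed.

End FiniteSupport.

Lemma det_neq0_row_mul_neq0 (R : idomainType) n (M : 'M[R]_n) (d : 'rV[R]_n) :
  \det M != 0 -> d != 0 -> exists r, (row r M *m d^T) 0 0 != 0.
Proof.
move=> detM0 d0; apply/not_existsP => Md_row; move/negP: d0; apply.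
have Md : M *m d^T = 0.
  apply/matrixP => i j; rewrite ord1 [RHS]mxE.
  by move/negP: (Md_row i); rewrite negbK -row_mul mxE => /eqP.
apply/eqP/matrixP => i j; rewrite ord1 mxE.
have /matrixP/(_ j 0) := congr1 (mulmx (\adj M)) Md.
rewrite mulmxA mul_adj_mx mul_scalar_mx mulmx0 !mxE => /eqP.
by rewrite mulf_eq0 (negbTE detM0) => /eqP.
Qed.

Section NatIndexing.
Variable N : nat.

Lemma ncoordE (x : expo N) (j : 'I_N) : ncoord x j = x 0 j.
Proof. by rewrite /ncoord valK. Qed.

Lemma nentryE (L : 'M[int]_N) (i j : 'I_N) : nentry L i j = L i j.
Proof. by rewrite /nentry !valK. Qed.

Lemma ncoord_out (x : expo N) i : (N <= i)%N -> ncoord x i = 0.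
Proof. by rewrite /ncoord; case: insubP => // j _ <-; rewrite leqNgt ltn_ord. Qed.

Lemma ncoordB (x y : expo N) i : ncoord (x - y) i = ncoord x i - ncoord y i.
Proof. by rewrite /ncoord; case: insubP => [j _ _|_]; rewrite ?mxE ?subr0. Qed.

Lemma sum_ord_widen (F : nat -> int) k : (k <= N)%N ->
  (forall j, (k <= j)%N -> F j = 0) -> \sum_(j < N) F j = \sum_(j < k) F j.
Proof.
move=> kN F0; rewrite (big_ord_widen N F kN) [in RHS]big_mkcond /=.
by apply: eq_bigr => i _; case: ifP => // /negbT; rewrite -leqNgt => /F0 ->.
Qed.

Lemma dot_ncoord (x y : expo N) :
  (x *m y^T) 0 0 = \sum_(j < N) ncoord x j * ncoord y j.
Proof. by rewrite mxE; apply: eq_bigr => j _; rewrite !ncoordE mxE. Qed.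

Lemma lam_ncoord (L : 'M[int]_N) (x y : expo N) :
  lam L x y = \sum_(i < N) ncoord x i * \sum_(j < N) nentry L i j * ncoord y j.
Proof.
rewrite /lam mxE; under eq_bigr do rewrite mxE mxE big_distrl /=.
rewrite exchange_big /=; apply: eq_bigr => i _; rewrite big_distrr /=.
by apply: eq_bigr => j _; rewrite !ncoordE nentryE mulrA.
Qed.

End NatIndexing.

Section SuperToric.
Variables (m p : nat) (B : 'M[int]_(m, m + p)) (L : 'M[int]_(m + p)) (k : nat).
Hypothesis kN : (k <= m + p)%N.

Lemma TplusIm_pairing (w : 'rV[int]_k) : TplusIm B L w ->
  exists b cc : expo (m + p), B *m b^T = 0 /\
    (forall j : 'I_(m + p), (k <= j)%N -> cc 0 j = 0) /\
    forall a : expo (m + p), (forall j : 'I_(m + p), (k <= j)%N -> a 0 j = 0) ->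
      (a *m b^T) 0 0 + lam L a cc = \sum_(i < k) ncoord a i * w 0 i.
Proof.
move=> [b [c [Bb Hw]]].
pose cc : expo (m + p) := \row_j ncoord c j.
have ccE j : ncoord cc j = ncoord c j.
  have [jN|Nj] := ltnP j (m + p); last by rewrite !ncoord_out // (leq_trans kN).
  by rewrite -[j]/(val (Ordinal jN)) ncoordE mxE.
exists b, cc; split=> //; split=> [j kj|a a_low].
  by rewrite -ncoordE ccE ncoord_out.
have a_out j : (k <= j)%N -> ncoord a j = 0.
  rewrite /ncoord; case: insubP => // j' _ <-; exact: a_low.
rewrite dot_ncoord lam_ncoord -big_split /=.
rewrite (sum_ord_widen (F := fun i => ncoord a i * ncoord b i +
  ncoord a i * \sum_(j < m + p) nentry L i j * ncoord cc j) kN); last first.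
  by move=> j /a_out ->; rewrite !mul0r.
apply: eq_bigr => i _; rewrite -mulrDr Hw.
rewrite (sum_ord_widen (F := fun j => nentry L i j * ncoord cc j) kN) => [|j kj];
  last first.
  by rewrite ccE ncoord_out ?mulr0.
by congr (_ * (_ + _)); apply: eq_bigr => j _; rewrite ccE ncoordE.
Qed.

Lemma super_toric_separates (a0 a1 : expo (m + p)) :
  super_toric B L -> low_expo k a0 -> low_expo k a1 -> a0 != a1 ->
  exists b cc : expo (m + p), B *m b^T = 0 /\
    (forall j : 'I_(m + p), (k <= j)%N -> cc 0 j = 0) /\
    (a0 *m b^T) 0 0 + lam L a0 cc != (a1 *m b^T) 0 0 + lam L a1 cc.
Proof.
move=> ST [_ a0_low] [_ a1_low] a01.
have k_gt0 : (0 < k)%N.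
  rewrite lt0n; apply: contra a01 => /eqP k0; apply/eqP/matrixP => i j.
  by rewrite ord1 a0_low ?a1_low // k0.
have [M [detM0 M_rows]] := ST k (andb_true_intro (conj k_gt0 kN)).
pose d : 'rV[int]_k := \row_i ncoord (a1 - a0) i.
have d0 : d != 0.
  apply: contra a01 => /eqP d0; apply/eqP/matrixP => i j; rewrite ord1.
  have [jk|kj] := ltnP j k; last by rewrite a0_low ?a1_low.
  have /matrixP/(_ 0 (Ordinal jk)) := d0; rewrite !mxE ncoordB.
  rewrite -[nat_of_ord (Ordinal jk)]/(nat_of_ord j) !ncoordE.
  by move/eqP; rewrite subr_eq0 => /eqP.
have [r Mr] := det_neq0_row_mul_neq0 detM0 d0.
have [b [cc [Bb [cc_low pairE]]]] := TplusIm_pairing (M_rows r).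
exists b, cc; split=> //; split=> //; rewrite !pairE //.
apply: contraNneq Mr => e01; apply/eqP; rewrite mxE.
transitivity (\sum_(i < k) ncoord a1 i * row r M 0 i -
              \sum_(i < k) ncoord a0 i * row r M 0 i).
  by rewrite -sumrB; apply: eq_bigr => i _; rewrite !mxE ncoordB; ring.
by rewrite e01 subrr.
Qed.

End SuperToric.

Lemma posp_subN z : posp z - posp (- z) = z.
Proof. rewrite /posp; lia. Qed.

Lemma posp_ge0 z : 0 <= posp z.
Proof. rewrite /posp; lia. Qed.

Section Elimination.
Variables (m p : nat) (qh : CC) (B : 'M[int]_(m, m + p)) (L : 'M[int]_(m + p)).
Variables (A I : set (qfun (m + p))) (k : nat).
Hypotheses (qh0 : qh != 0) (qh_nroot : forall n, (0 < n)%N -> qh ^+ n != 1).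
Hypotheses (skL : skew_symmetric L) (ST : super_toric B L) (kN : (k <= m + p)%N).
Hypotheses (HA : is_subalg qh L A) (HI : is_ideal qh L A I) (TI : torus_invariant B I).
Hypothesis Amono : forall a, nonneg a -> A (qmono a).

Lemma twist_exponentE (a b u v : expo (m + p)) :
  2 * ((a + (u + v)) *m b^T) 0 0 + (lam L u a + lam L (a + u) v) =
  2 * ((a *m b^T) 0 0 + lam L a (v - u)) +
  (2 * ((u + v) *m b^T) 0 0 + lam L u v - lam L v u) + (lam L v a + lam L (a + v) u).
Proof.
rewrite mulmxDl mxE !lamDl !lamDr lamNr (@lam_skew _ L a u skL) (@lam_skew _ L a v skL).
ring.
Qed.

(* Kill the [a0]-coefficient of [g] while keeping the [a1]-one: compare the twisted
   conjugates [t_b(X^u g X^v)] and [X^v g X^u], whose coefficients at [a + u + v]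
   differ by the factor [qh^(2 phi(a) + K)], with [phi] separating [a0] from [a1]. *)
Lemma separating_twist g a0 a1 : I g -> low_expo k a0 -> low_expo k a1 -> a0 != a1 ->
  exists (h : qfun (m + p)) (s0 : expo (m + p)) (c : expo (m + p) -> CC),
    [/\ I h, low_expo k s0, forall a, h (a + s0) = g a * c a, c a0 = 0 & c a1 != 0].
Proof.
move=> Ig a0_low a1_low a01.
have [b [cc [Bb [cc_low sep]]]] := super_toric_separates kN ST a0_low a1_low a01.
pose u : expo (m + p) := \row_j posp (- cc 0 j).
pose v : expo (m + p) := \row_j posp (cc 0 j).
have vu : v - u = cc by apply/matrixP => i j; rewrite ord1 !mxE posp_subN.
have u_low : low_expo k u by split=> [i|i ki]; rewrite mxE ?posp_ge0 ?cc_low ?oppr0.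
have v_low : low_expo k v by split=> [i|i ki]; rewrite mxE ?posp_ge0 ?cc_low.
pose phi a := (a *m b^T) 0 0 + lam L a cc.
pose K := 2 * ((u + v) *m b^T) 0 0 + lam L u v - lam L v u.
pose z0 := qh ^ (2 * phi a0 + K).
pose h1 := toric_act b (qh ^+ 2) (qmul qh L (qmul qh L (qmono u) g) (qmono v)).
pose h2 := qmul qh L (qmul qh L (qmono v) g) (qmono u).
exists (qadd h1 (qscale (- z0) h2)), (u + v),
  (fun a => qh ^ (lam L v a + lam L (a + v) u) * (qh ^ (2 * phi a + K) - z0)).
have Iconj w w' : nonneg w -> nonneg w' ->
    I (qmul qh L (qmul qh L (qmono w) g) (qmono w')).
  move=> w_ge0 w'_ge0; apply: (HI.2.2.2 _ _ (Amono w'_ge0) _).2.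
  exact: (HI.2.2.2 _ _ (Amono w_ge0) Ig).1.
split.
- apply: HI.2.2.1.
    by apply: TI; rewrite ?expf_neq0 //; apply: Iconj; [exact: u_low.1 | exact: v_low.1].
  by apply: ideal_qscale HA HI _; apply: Iconj; [exact: v_low.1 | exact: u_low.1].
- exact: low_expoD.
- move=> a; rewrite /qadd /qscale /h1 /h2 /toric_act qmul_conj_monoE //.
  rewrite [u + v]addrC qmul_conj_monoE // [v + u]addrC.
  have sqrE z : (qh ^+ 2) ^ z = qh ^ (2 * z) by rewrite -exprz_exp.
  rewrite sqrE mulrCA -expfzDr // twist_exponentE vu -/(phi a) -/K expfzDr //.
  by move: (g a) (qh ^ _) (qh ^ (lam L v a + _)) z0 => ga x y z; ring.
- by rewrite subrr mulr0.
rewrite mulf_eq0 negb_or expfz_neq0 //= subr_eq0.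
apply: contra sep => /eqP /(expfz_inj qh0 qh_nroot); rewrite /phi => e; apply/eqP.
by move: e; clear z0 h1 h2; move: (_ + lam L a0 cc) (_ + lam L a1 cc) K => x0 x1 K'; lia.
Qed.

Lemma low_supported_eq0 g : (forall a, low_expo k a -> ~ I (qmono a)) ->
  I g -> fsupp_in (low_expo k) g -> g = qzero (m + p).
Proof.
move=> low_notin Ig [s g_supp]; have [n sn] := ubnP (size s).
elim: n s g Ig g_supp sn => // n IHn s g Ig g_supp sn.
have [[a0 ga0]|no_a0] := pselect (exists a0, g a0 != 0); last first.
  by apply/funext => c; apply/eqP/negPn/negP => gc; apply: no_a0; exists c.
have [a0s a0_low] := g_supp _ ga0.
have [[a1 [ga1 a10]]|no_a1] := pselect (exists a1, g a1 != 0 /\ a1 != a0); last first.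
  exfalso; apply: (low_notin _ a0_low).
  suff -> : qmono a0 = qscale (g a0)^-1 g by apply: ideal_qscale HA HI Ig.
  apply/funext => x; rewrite /qscale /qmono; case: (x =P a0) => [->|/eqP xa0].
    by rewrite mulVf.
  suff -> : g x = 0 by rewrite mulr0.
  by apply/eqP/negPn/negP => gx; apply: no_a1; exists x.
have [a1s a1_low] := g_supp _ ga1.
have a01 : a0 != a1 by rewrite eq_sym.
have [h [s0 [c [Ih s0_low hE ca0 ca1]]]] := separating_twist Ig a0_low a1_low a01.
suff /(congr1 (fun f => f (a1 + s0))) : h = qzero _.
  by rewrite hE /qzero => /eqP; rewrite mulf_eq0 (negbTE ga1) (negbTE ca1).
apply: (IHn [seq y + s0 | y <- rem a0 s]) => // [x|].
  rewrite -(subrK s0 x) hE mulf_eq0 negb_or => /andP[gx cx].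
  have [xs x_low] := g_supp _ gx; split; last exact: low_expoD.
  by apply: map_f; apply: rem_mem xs; apply: contraNneq cx => ->; rewrite ca0.
have s_gt0 : (0 < size s)%N by rewrite lt0n size_eq0; apply: contraTneq a0s => ->.
by rewrite size_map size_rem // -ltnS prednK.
Qed.

End Elimination.

Definition restrict N (P : pred (expo N)) (f : qfun N) : qfun N :=
  fun c => if P c then f c else 0.

Definition high_expo N k : pred (expo N) :=
  fun c => [exists i : 'I_N, (k <= i)%N && (0 < c 0 i)].

Lemma restrictCE N (P : pred (expo N)) f :
  restrict (predC P) f = qadd f (qscale (-1) (restrict P f)).
Proof.
apply/funext => c; rewrite /restrict /qadd /qscale /=.
by case: (P c); rewrite ?mulr0 ?addr0 // mulN1r subrr.
Qed.

Lemma restrict_eq_self N (P : pred (expo N)) f :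
  restrict (predC P) f = qzero N -> restrict P f = f.
Proof.
move=> /(congr1 (fun f => f _)) f0; apply/funext => c; move: (f0 c).
by rewrite /restrict /=; case: (P c).
Qed.

Section HighPart.
Variables (N : nat) (qh : CC) (L : 'M[int]_N) (A J : set (qfun N)) (k : nat).
Hypotheses (qh0 : qh != 0) (HA : is_subalg qh L A) (HJ : is_ideal qh L A J).
Hypothesis Amono : forall a, nonneg a -> A (qmono a).

Lemma restrict_high_in_ideal f :
  (forall i : 'I_N, (k <= i)%N -> J (qmono (evec i))) ->
  fsupp_in (@nonneg N) f -> J (restrict (high_expo k) f).
Proof.
move=> Je [s f_supp]; apply: (fsupp_in_sub (P := fun a => nonneg a /\ high_expo k a)).
- exact: HJ.2.1.
- exact: HJ.2.2.1.
- by move=> z g Jg; apply: ideal_qscale HA HJ Jg.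
- move=> a [a_ge0 /existsP[i /andP[ki ai]]].
  rewrite -[a](subrK (evec i)) (@qmono_addE _ qh L) //; apply: ideal_qscale HA HJ _.
  by apply: (HJ.2.2.2 _ _ _ (Je i ki)).1; apply/Amono/nonneg_subr_evec.
exists s => c; rewrite /restrict; case: ifP => [hc /f_supp[]|]; last by rewrite eqxx.
by split.
Qed.

End HighPart.

Lemma restrict_low_fsupp N k (f : qfun N) : fsupp_in (@nonneg N) f ->
  fsupp_in (low_expo k) (restrict (predC (high_expo k)) f).
Proof.
move=> [s f_supp]; exists s => c; rewrite /restrict /=.
case: ifP => [/negP hc|]; last by rewrite eqxx.
move/f_supp => [cs c_ge0]; do 2!split=> //; move=> i ki; apply/eqP.
rewrite eq_le c_ge0 andbT leNgt; apply/negP => ci.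
by apply: hc; apply/existsP; exists i; rewrite ki.
Qed.

Section ClusterAlgebra.
Variables (m p : nat) (qh : CC) (B : 'M[int]_(m, m + p)) (L : 'M[int]_(m + p)).
Hypothesis qh0 : qh != 0.

Lemma qcluster_alg_mono : forall a, nonneg a -> qcluster_alg qh B L (qmono a).
Proof.
apply: subalg_mono qh0 (is_subalg_gen qh L _) _ => i; apply: subalg_gen_sub.
by exists (init_seed B L); split; [exact: reach_refl | exists i].
Qed.

Lemma qaffine_sub_qcluster_alg : qaffine qh L `<=` qcluster_alg qh B L.
Proof.
move=> f; apply=> [|_ [i ->]]; first exact: is_subalg_gen.
by apply: qcluster_alg_mono; exact: nonneg_evec.
Qed.

End ClusterAlgebra.

Theorem mainTheorem3 (m p : nat) (qh : CC)
    (B : 'M[int]_(m, m + p)) (L : 'M[int]_(m + p)) (I : set (qfun (m + p)))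
    (k : nat) :
  qh != 0 ->
  (forall d : nat, (0 < d)%N -> (qh ^+ 2) ^+ d != 1) ->
  compatible_pair B L ->
  (forall P, is_prime_ideal qh L (qcluster_alg qh B L) P ->
             is_completely_prime qh L (qcluster_alg qh B L) P) ->
  super_toric B L ->
  torus_invariant B I ->
  (exists f, I f /\ f <> qzero (m + p)) ->
  is_prime_ideal qh L (qcluster_alg qh B L) I ->
  (k <= m + p)%N ->
  (forall i : 'I_(m + p), I (qmono (evec i)) <-> (k <= i)%N) ->
  I `&` qaffine qh L =
  ideal_gen qh L (qaffine qh L)
    [set f | exists i : 'I_(m + p), (k <= i)%N /\ f = qmono (evec i)].
Proof.
move=> qh0 qh2_nroot [_ [skL _]] cp_primes ST TI _ Iprime kN Ie.
have qh_nroot n : (0 < n)%N -> qh ^+ n != 1.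
  by move=> n0; apply: contraNneq (qh2_nroot n n0) => qhn; rewrite exprAC qhn expr1n.
have HA := is_subalg_gen qh L (cluster_vars qh B L).
have HQ := is_subalg_gen qh L [set f | exists i, f = qmono (evec i)].
have Amono := qcluster_alg_mono (B := B) (L := L) qh0.
have Qmono := @qaffine_mono _ qh L qh0.
have HI := Iprime.1.
have low_notin : forall a, low_expo k a -> ~ I (qmono a).
  apply: low_mono_notin qh0 HA Amono (cp_primes I Iprime) _ => i.
  by rewrite ltnNge => /negP + /Ie.
apply/seteqP; split=> [f [If /qaffine_fsupp f_supp] J HJ J_gen|f]; last first.
  apply; first exact: ideal_setI_subalg (qaffine_sub_qcluster_alg (B := B) qh0) HQ HI.
  by move=> _ [i [ki ->]]; split; [exact/Ie | apply: Qmono; exact: nonneg_evec].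
have I_high := restrict_high_in_ideal qh0 HA HI Amono (fun i => (Ie i).2) f_supp.
have f_low : restrict (predC (high_expo k)) f = qzero _.
  apply: (low_supported_eq0 qh0 qh_nroot skL ST kN HA HI TI Amono low_notin).
    by rewrite restrictCE; apply: HI.2.2.1 If (ideal_qscale _ HA HI I_high).
  exact: restrict_low_fsupp.
rewrite -(restrict_eq_self f_low).
apply: (restrict_high_in_ideal (k := k) qh0 HQ HJ Qmono _ f_supp) => i ki.
by apply: J_gen; exists i.
Qed.
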